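(* Let $K=\mathbb{Q}(\gamma)$ be a number field of degree $n\ge2$ and let $f=a_nX^n+\dotsb+a_0\in\mathbb{Z}[X]$ be irreducible with $f(\gamma)=0$. For $0\le j\le n$ put $p_j=a_n\gamma^j+a_{n-1}\gamma^{j-1}+\dotsb+a_{n-j}$ and $q_j=a_j+a_{j-1}\gamma^{-1}+\dotsb+a_0\gamma^{-j}$, and let $M=\mathbb{Z}+\mathbb{Z}\gamma+\dotsb+\mathbb{Z}\gamma^{n-1}$, $D=\mathbb{Z}p_0+\dotsb+\mathbb{Z}p_{n-1}$, $N=\mathbb{Z}q_0+\dotsb+\mathbb{Z}q_{n-1}$. Then $$\mathrm{Bl}(\mathbb{Z}+\mathbb{Z}\gamma)=M:M=\mathbb{Z}[\gamma]\cap\mathbb{Z}[\gamma^{-1}]=\mathbb{Z}+N=\mathbb{Z}+D,$$ and $N$ and $D$ are coprime invertible integral ideals of this ring $A=\mathrm{Bl}(\mathbb{Z}+\mathbb{Z}\gamma)$ (i.e. ideals contained in $A$), with $A/N\cong\mathbb{Z}/a_0\mathbb{Z}$ and $A/D\cong\mathbb{Z}/a_n\mathbb{Z}$ as rings, such that $N:D=\gamma\cdot A$.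
   Context: All colon operations are taken inside $K$: for additive subgroups $I,J\subseteq K$, $I:J=\{x\in K: xJ\subseteq I\}$, $IJ$ is the group of finite sums of products, $I^0=I:I$, $I^{k+1}=I^kI$, and $\mathrm{Bl}(I)=\bigcup_{k\ge0}(I^k:I^k)$. Ideals $N,D$ of a commutative ring $A$ are coprime if $N+D=A$; an ideal $N$ of $A$ is invertible if there is an $A$-submodule $J\subseteq K$ with $NJ=A$. *)

From HB Require Import structures.
From mathcomp Require Import all_boot all_order all_algebra all_field.
Set Implicit Arguments. Unset Strict Implicit. Unset Printing Implicit Defensive.
Import Order.TTheory GRing.Theory Num.Theory.
Local Open Scope ring_scope.

Section Subgroups.
Variable K : fieldType.

Definition eqg (I J : K -> Prop) : Prop := forall x, I x <-> J x.
Definition subg (I J : K -> Prop) : Prop := forall x, I x -> J x.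

Definition Zspan (m : nat) (v : 'I_m -> K) : K -> Prop :=
  fun x => exists c : 'I_m -> int, x = \sum_(i < m) v i *~ c i.

Definition addg (I J : K -> Prop) : K -> Prop :=
  fun x => exists a b, I a /\ J b /\ x = a + b.

Definition prodg (I J : K -> Prop) : K -> Prop :=
  fun x => exists (m : nat) (a b : 'I_m -> K),
    (forall i, I (a i) /\ J (b i)) /\ x = \sum_(i < m) a i * b i.

Definition colon (I J : K -> Prop) : K -> Prop :=
  fun x => forall y, J y -> I (x * y).

Fixpoint powg (I : K -> Prop) (k : nat) : K -> Prop :=
  match k with
  | 0 => colon I I
  | k'.+1 => prodg (powg I k') I
  end.

Definition Bl (I : K -> Prop) : K -> Prop :=
  fun x => exists k, colon (powg I k) (powg I k) x.

Definition scaleg (g : K) (A : K -> Prop) : K -> Prop :=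
  fun x => exists a, A a /\ x = g * a.

Definition Zadj (g : K) : K -> Prop :=
  fun x => exists p : {poly int}, x = (map_poly (fun z : int => z%:~R) p).[g].

Definition addsubgroup (J : K -> Prop) : Prop :=
  J 0 /\ (forall x y, J x -> J y -> J (x - y)).

Definition Asubmodule (A J : K -> Prop) : Prop :=
  addsubgroup J /\ (forall a x, A a -> J x -> J (a * x)).

Definition integral_ideal (A N : K -> Prop) : Prop :=
  Asubmodule A N /\ subg N A.

Definition invertible_ideal (A N : K -> Prop) : Prop :=
  exists J : K -> Prop, Asubmodule A J /\ eqg (prodg N J) A.

Definition coprime_ideals (A N D : K -> Prop) : Prop := eqg (addg N D) A.

(* A/N is isomorphic, as a ring, to Z/mZ: expressed (first isomorphism theorem)
   as the existence of a surjective ring homomorphism A -> Z/mZ with kernel N,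
   where Z/mZ is represented by integers modulo m. *)
Definition quot_iso_Zmod (A N : K -> Prop) (m : int) : Prop :=
  exists phi : K -> int,
    [/\ (forall x y, A x -> A y -> (phi (x + y) = phi x + phi y %[mod m])%Z),
        (forall x y, A x -> A y -> (phi (x * y) = phi x * phi y %[mod m])%Z),
        (phi (GRing.one K) = 1 %[mod m])%Z,
        (forall z : int, exists x, A x /\ (phi x = z %[mod m])%Z) &
        (forall x, A x -> (N x <-> (m %| phi x)%Z))].

End Subgroups.

Definition irreducible_Z (f : {poly int}) : Prop :=
  [/\ f != 0, f \isn't a GRing.unit &
      forall g h : {poly int}, f = g * h -> g \is a GRing.unit \/ h \is a GRing.unit].

Definition pj (K : fieldType) (f : {poly int}) (n : nat) (g : K) (j : nat) : K :=
  \sum_(i < j.+1) (f`_(n - i))%:~R * g ^+ (j - i).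

Definition qj (K : fieldType) (f : {poly int}) (g : K) (j : nat) : K :=
  \sum_(i < j.+1) (f`_(j - i))%:~R * g ^- i.

(* Write [a_i] for the coefficients of [f] and [r_k = a_k + a_(k+1) gamma + ... + a_n gamma^(n-k)]
   ([tail k] below), so that [p_j = r_(n-j)], [q_j = - gamma r_(j+1)] and
   [gamma r_(k+1) = r_k - a_k].  As [f] is primitive of degree [Q(gamma):Q], Gauss's lemma says
   that the integer polynomials vanishing at [gamma] are the multiples of [f]; this identifies
   [D] with [{x in Z[gamma] | gamma x in Z[gamma^-1]}] and [N] with [gamma D].  Splitting off
   constant terms gives [Z[gamma] cap Z[gamma^-1] = Z + D = Z + N], a ring stabilising [M]
   because [D M] lies in [M].  The power [(Z + Z gamma)^k] consists of the values of integer
   polynomials of degree [<= k], which squeezes [Bl(Z + Z gamma)] between [M : M] and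
   [Z[gamma] cap Z[gamma^-1]].  Each [a_k = r_k - gamma r_(k+1)] lies in [N + D], hence so does
   their gcd [1]: this gives coprimality, the inverses [A + gamma A] of [D] and
   [A + gamma^-1 A] of [N], and [N : D = gamma A].  Finally, an integer [c] in [N] has
   [gamma^-1 c = P(gamma)], so [f] divides [X P - c] and [a_0 | c]; symmetrically an integer in
   [D] is divisible by [a_n]. *)

From HB Require Import structures.
From mathcomp Require Import all_boot all_order all_algebra all_field.
From mathcomp Require Import ring zify.
From Stdlib Require Import ClassicalEpsilon FunctionalExtensionality PropExtensionality.
Import Order.TTheory GRing.Theory Num.Theory.
Local Open Scope ring_scope.
Set Implicit Arguments. Unset Strict Implicit. Unset Printing Implicit Defensive.

Section AdditiveSubgroups.
Variable K : fieldType.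
Implicit Types (I J S : K -> Prop) (x y : K).

Section Closure.
Variable S : K -> Prop.
Hypothesis S_grp : addsubgroup S.

Lemma addsubgroup0 : S 0.
Proof. exact: S_grp.1. Qed.

Lemma addsubgroupB x y : S x -> S y -> S (x - y).
Proof. exact: S_grp.2. Qed.

Lemma addsubgroupN x : S x -> S (- x).
Proof. by move=> Sx; rewrite -sub0r; apply: addsubgroupB => //; apply: addsubgroup0. Qed.

Lemma addsubgroupD x y : S x -> S y -> S (x + y).
Proof. by move=> Sx Sy; rewrite -[y]opprK; apply/addsubgroupB/addsubgroupN. Qed.

Lemma addsubgroupMz x (c : int) : S x -> S (x *~ c).
Proof.
move=> Sx; have Sxn k : S (x *+ k).
  elim: k => [|k IH]; first by rewrite mulr0n; apply: addsubgroup0.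
  by rewrite mulrS; apply: addsubgroupD.
by case: c => k; [apply: Sxn | rewrite NegzE mulrNz; apply/addsubgroupN/Sxn].
Qed.

Lemma addsubgroup_intrM (c : int) x : S x -> S (c%:~R * x).
Proof. by rewrite mulrzl; apply: addsubgroupMz. Qed.

Lemma addsubgroup_sum m (F : 'I_m -> K) : (forall i, S (F i)) -> S (\sum_(i < m) F i).
Proof.
by move=> SF; apply: (big_ind S) => //; [apply: addsubgroup0 | apply: addsubgroupD].
Qed.

Lemma addsubgroup_zcontents (P : {poly int}) :
  (forall i, S (P`_i)%:~R) -> S (zcontents P)%:~R.
Proof.
move=> SP; rewrite /zcontents intrM; apply: addsubgroup_intrM.
apply: (big_ind (fun d : nat => S (d%:Z)%:~R)); first exact: addsubgroup0.
  move=> u v Su Sv; have [c [d]] := Bezoutz u v; rewrite -[gcdz _ _]/(gcdn u v)%:Z => <-.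
  by rewrite intrD !intrM; apply: addsubgroupD; apply: addsubgroup_intrM.
move=> i _; rewrite abszE; have [P0|P0] := lerP 0 P`_i; first by rewrite ger0_norm.
by rewrite ltr0_norm // intrN; apply: addsubgroupN.
Qed.

End Closure.

Lemma addsubgroup_mull S x : addsubgroup S -> addsubgroup (fun y => S (x * y)).
Proof.
move=> S_grp; split; first by rewrite mulr0; apply: addsubgroup0.
by move=> y z Sy Sz; rewrite mulrBr; apply: addsubgroupB.
Qed.

Lemma addsubgroupI I J : addsubgroup I -> addsubgroup J -> addsubgroup (fun x => I x /\ J x).
Proof.
move=> I_grp J_grp; split; first by split; apply: addsubgroup0.
by move=> x y [Ix Jx] [Iy Jy]; split; apply: addsubgroupB.
Qed.

Lemma addsubgroup_addg I J : addsubgroup I -> addsubgroup J -> addsubgroup (addg I J).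
Proof.
move=> I_grp J_grp; split.
  by exists 0, 0; split; [|split]; rewrite ?addr0 //; apply: addsubgroup0.
move=> _ _ [a [b [Ia [Jb ->]]]] [c [d [Ic [Jd ->]]]]; exists (a - c), (b - d).
by split; [|split]; [apply: addsubgroupB.. | ring].
Qed.

Lemma addsubgroup_Zspan m (v : 'I_m -> K) : addsubgroup (Zspan v).
Proof.
split; first by exists (fun _ => 0); rewrite big1 // => i _; rewrite mulr0z.
move=> x y [c ->] [d ->]; exists (fun i => c i - d i).
by rewrite -sumrB; apply: eq_bigr => i _; rewrite mulrzBr.
Qed.

Lemma Zspan_gen m (v : 'I_m -> K) i : Zspan v (v i).
Proof.
exists (fun j => (j == i)%:Z); rewrite (bigD1 i) //= eqxx mulr1z big1 ?addr0 //.
by move=> j /negbTE ->; rewrite mulr0z.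
Qed.

Lemma Zspan_sub m (v : 'I_m -> K) S :
  addsubgroup S -> (forall i, S (v i)) -> subg (Zspan v) S.
Proof. by move=> S_grp Sv x [c ->]; apply: addsubgroup_sum => // i; apply: addsubgroupMz. Qed.

Lemma Zspan1P x : Zspan (fun _ : 'I_1 => 1) x <-> exists c : int, x = c%:~R.
Proof.
split; first by move=> [c ->]; exists (c ord0); rewrite big_ord1.
by move=> [c ->]; exists (fun _ => c); rewrite big_ord1.
Qed.

Lemma prodg_mul I J x y : I x -> J y -> prodg I J (x * y).
Proof. by move=> Ix Jy; exists 1%N, (fun _ => x), (fun _ => y); rewrite big_ord1. Qed.

Lemma prodg2 I J x1 y1 x2 y2 :
  I x1 -> J y1 -> I x2 -> J y2 -> prodg I J (x1 * y1 + x2 * y2).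
Proof.
move=> Ix1 Jy1 Ix2 Jy2; exists 2%N, (fun i : 'I_2 => if val i == 0%N then x1 else x2),
  (fun i : 'I_2 => if val i == 0%N then y1 else y2).
by split; [case=> [[|[|]]] | rewrite !big_ord_recl big_ord0 addr0].
Qed.

Lemma prodg_sub I J S :
  addsubgroup S -> (forall x y, I x -> J y -> S (x * y)) -> subg (prodg I J) S.
Proof.
move=> S_grp IJS x [m [u [v [uv ->]]]]; apply: addsubgroup_sum => // i.
by have [] := uv i; apply: IJS.
Qed.

End AdditiveSubgroups.

Section IntegerPolynomials.
Variable K : fieldType.
Implicit Types (g x y : K) (P Q : {poly int}).

Definition zeval P g : K := (map_poly (fun z : int => z%:~R) P).[g].

Lemma zevalD P Q g : zeval (P + Q) g = zeval P g + zeval Q g.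
Proof. by rewrite /zeval rmorphD hornerD. Qed.

Lemma zevalN P g : zeval (- P) g = - zeval P g.
Proof. by rewrite /zeval rmorphN hornerN. Qed.

Lemma zevalM P Q g : zeval (P * Q) g = zeval P g * zeval Q g.
Proof. by rewrite /zeval rmorphM hornerM. Qed.

Lemma zevalC (c : int) g : zeval c%:P g = c%:~R.
Proof. by rewrite /zeval map_polyC hornerC. Qed.

Lemma zevalX g : zeval 'X g = g.
Proof. by rewrite /zeval map_polyX hornerX. Qed.

Lemma zevalXn k g : zeval 'X^k g = g ^+ k.
Proof. by rewrite /zeval map_polyXn hornerXn. Qed.

Lemma zevalZ (c : int) P g : zeval (c *: P) g = c%:~R * zeval P g.
Proof. by rewrite -mul_polyC zevalM zevalC. Qed.

Lemma zeval_coef_wide m P g :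
  (size P <= m)%N -> zeval P g = \sum_(i < m) (P`_i)%:~R * g ^+ i.
Proof.
move=> sPm; rewrite /zeval (@horner_coef_wide _ m); last first.
  by apply: leq_trans sPm; rewrite map_polyE (leq_trans (size_Poly _)) ?size_map.
by apply: eq_bigr => i _; rewrite coef_map_id0 // mulr0z.
Qed.

Lemma zeval_drop1 P g : zeval P g = (P`_0)%:~R + zeval (drop_poly 1 P) g * g.
Proof.
have take1 : take_poly 1 P = (P`_0)%:P.
  by apply/polyP => -[|i]; rewrite coef_take_poly coefC.
by rewrite -{1}(poly_take_drop 1 P) take1 zevalD zevalC zevalM zevalX.
Qed.

Lemma zeval_rev m P g : g != 0 -> (size P <= m.+1)%N ->
  zeval P g * g ^- m = zeval (\poly_(i < m.+1) P`_(m - i)) g^-1.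
Proof.
move=> g0 sP; rewrite (zeval_coef_wide _ sP) (zeval_coef_wide _ (size_poly _ _)).
rewrite mulr_suml [RHS](reindex_inj rev_ord_inj) /=; apply: eq_bigr => i _.
have ltim := ltn_ord i; rewrite subSS coef_poly ifT; last by lia.
have -> : (m - (m - i) = i)%N by lia.
have gU : g \is a GRing.unit by rewrite unitfE.
rewrite -mulrA exprVn (exprB _ gU); last by lia.
by rewrite invf_div.
Qed.

Lemma Zadj_zeval P g : Zadj g (zeval P g).
Proof. by exists P. Qed.

Lemma addsubgroup_Zadj g : addsubgroup (Zadj g).
Proof.
split; first by exists 0; rewrite /zeval map_poly0 horner0.
by move=> x y [P ->] [Q ->]; exists (P - Q); rewrite -[RHS]/(zeval _ g) zevalD zevalN.
Qed.

Lemma Zadj_mul g x y : Zadj g x -> Zadj g y -> Zadj g (x * y).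
Proof. by move=> [P ->] [Q ->]; exists (P * Q); rewrite -[RHS]/(zeval _ g) zevalM. Qed.

Lemma Zadj_int g (c : int) : Zadj g c%:~R.
Proof. by exists c%:P; rewrite -[RHS]/(zeval _ g) zevalC. Qed.

Lemma Zadj_gen g : Zadj g g.
Proof. by exists 'X; rewrite -[RHS]/(zeval _ g) zevalX. Qed.

Lemma Zadj_exp g k : Zadj g (g ^+ k).
Proof. by exists 'X^k; rewrite -[RHS]/(zeval _ g) zevalXn. Qed.

Definition Zadj_cap g x := Zadj g x /\ Zadj g^-1 x.

Lemma addsubgroup_Zadj_cap g : addsubgroup (Zadj_cap g).
Proof. by apply: addsubgroupI; apply: addsubgroup_Zadj. Qed.

Lemma Zadj_cap_mul g x y : Zadj_cap g x -> Zadj_cap g y -> Zadj_cap g (x * y).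
Proof. by move=> [? ?] [? ?]; split; apply: Zadj_mul. Qed.

Lemma Zadj_cap1 g : Zadj_cap g 1.
Proof. by split; apply: (Zadj_int _ 1). Qed.

End IntegerPolynomials.

Section PowersOfLinearSpan.
Variables (K : fieldType) (g : K).
Implicit Types x y : K.

Definition Zdeg_lt m x := exists P : {poly int}, (size P <= m)%N /\ x = zeval P g.

Local Notation Zpows m := (Zspan (fun i : 'I_m => g ^+ i)).

Lemma addsubgroup_Zdeg_lt m : addsubgroup (Zdeg_lt m).
Proof.
split; first by exists 0; rewrite size_poly0 /zeval map_poly0 horner0.
move=> x y [P [sP ->]] [Q [sQ ->]]; exists (P - Q); split; last by rewrite zevalD zevalN.
by rewrite (leq_trans (size_polyD _ _)) // size_polyN geq_max sP.
Qed.

Lemma Zdeg_lt_monomial m i (c : int) : (i < m)%N -> Zdeg_lt m (c%:~R * g ^+ i).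
Proof.
move=> ltim; exists (c *: 'X^i); split; last by rewrite zevalZ zevalXn.
by rewrite (leq_trans (size_scale_leq _ _)) // size_polyXn.
Qed.

Lemma Zdeg_lt_exp m i : (i < m)%N -> Zdeg_lt m (g ^+ i).
Proof. by move=> ltim; rewrite -[_ ^+ _]mul1r -[1]mulr1z; apply: Zdeg_lt_monomial. Qed.

Lemma Zdeg_ltM m1 m2 x y :
  Zdeg_lt m1.+1 x -> Zdeg_lt m2.+1 y -> Zdeg_lt (m1 + m2).+1 (x * y).
Proof.
move=> [P [sP ->]] [Q [sQ ->]]; exists (P * Q); split; last by rewrite zevalM.
by rewrite (leq_trans (size_polyMleq _ _)) //; lia.
Qed.

Lemma Zspan_expE m x : Zpows m x <-> Zdeg_lt m x.
Proof.
split; first by apply: Zspan_sub => [|i]; [apply: addsubgroup_Zdeg_lt | apply: Zdeg_lt_exp].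
move=> [P [sP ->]]; rewrite (zeval_coef_wide _ sP); exists (fun i => P`_i).
by apply: eq_bigr => i _; rewrite mulrzl.
Qed.

Lemma powg_Zpows2 k x : powg (Zpows 2) k.+1 x <-> Zdeg_lt k.+2 x.
Proof.
elim: k x => [|k IH] x; split.
- apply: prodg_sub => [|a b a_colon /a_colon /Zspan_expE //]; exact: addsubgroup_Zdeg_lt.
- by move=> /Zspan_expE Zx; rewrite -[x]mul1r; apply: prodg_mul => // y; rewrite mul1r.
- apply: prodg_sub => [|a b /IH Pa /Zspan_expE Pb]; first exact: addsubgroup_Zdeg_lt.
  by have := Zdeg_ltM Pa Pb; rewrite addn1.
move=> [P [sP ->]]; set c := P`_k.+2.
have dropP : drop_poly k.+2 P = c%:P.
  apply/polyP => -[|i]; rewrite coef_drop_poly coefC ?add0n //.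
  by rewrite nth_default // (leq_trans sP); lia.
have -> : zeval P g = zeval (take_poly k.+2 P) g * g ^+ 0 + c%:~R * g ^+ k.+1 * g ^+ 1.
  by rewrite -{1}(poly_take_drop k.+2 P) dropP zevalD zevalM zevalC zevalXn exprS; ring.
apply: prodg2.
- by apply/IH; exists (take_poly k.+2 P); rewrite size_take_poly.
- exact: (Zspan_gen _ (ord0 : 'I_2)).
- by apply/IH; apply: Zdeg_lt_monomial.
- exact: (Zspan_gen _ (ord_max : 'I_2)).
Qed.

Lemma Bl_Zpows2_of_colon m x : (2 <= m)%N -> colon (Zpows m) (Zpows m) x -> Bl (Zpows 2) x.
Proof.
move=> le2m xM; exists (m - 2).+1 => y /powg_Zpows2 My; apply/powg_Zpows2.
have em : (m - 2).+2 = m by lia.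
by rewrite em in My *; apply/Zspan_expE/xM/Zspan_expE.
Qed.

Hypothesis g_neq0 : g != 0.

Lemma Zadj_cap_of_colon m x : colon (Zdeg_lt m.+1) (Zdeg_lt m.+1) x -> Zadj_cap g x.
Proof.
move=> xP; split.
  have [P [_]] := xP _ (Zdeg_lt_exp (ltn0Sn m)).
  by rewrite expr0 mulr1 => ->; apply: Zadj_zeval.
have [T [sT xgm]] := xP _ (Zdeg_lt_exp (ltnSn m)).
have := zeval_rev g_neq0 sT; rewrite -xgm mulrK ?unitfE ?expf_neq0 // => ->.
exact: Zadj_zeval.
Qed.

Lemma Zadj_cap_of_Bl x : Bl (Zpows 2) x -> Zadj_cap g x.
Proof.
move=> [[|k] xP]; last first.
  by apply: (@Zadj_cap_of_colon k.+1) => y /powg_Zpows2 /xP /powg_Zpows2.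
have one_colon : colon (Zpows 2) (Zpows 2) 1 by move=> y; rewrite mul1r.
apply: (@Zadj_cap_of_colon 1) => y /Zspan_expE Py.
by apply/Zspan_expE; have := xP 1 one_colon; rewrite mulr1; apply.
Qed.

End PowersOfLinearSpan.

Section IdealsOfSubring.
Variables (K : fieldType) (A : K -> Prop).
Hypotheses (A_grp : addsubgroup A) (A_mul : forall x y, A x -> A y -> A (x * y)) (A1 : A 1).
Implicit Types (I J T : K -> Prop) (x y : K).

Lemma subring_int (c : int) : A c%:~R.
Proof. exact: addsubgroupMz. Qed.

Lemma eqg_Zspan1_add T : subg T A -> (forall x, A x -> exists c : int, T (x - c%:~R)) ->
  eqg A (addg (Zspan (fun _ : 'I_1 => 1)) T).
Proof.
move=> TA Tdec x; split.
  move=> /Tdec [c Tc]; exists c%:~R, (x - c%:~R).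
  by split; [apply/Zspan1P; exists c | split=> //; rewrite addrC subrK].
move=> [_ [y [/Zspan1P [c ->] [Ty ->]]]].
by apply: addsubgroupD => //; [apply: subring_int | apply: TA].
Qed.

Lemma quot_iso_Zmod_intro T (m : int) :
  Asubmodule A T -> (forall x, A x -> exists c : int, T (x - c%:~R)) ->
  T m%:~R -> (forall c : int, T c%:~R -> (m %| c)%Z) -> quot_iso_Zmod A T m.
Proof.
move=> [T_grp T_mul] Tdec Tm Tdvd.
pose phi x := epsilon (inhabits 0%Z) (fun c : int => T (x - c%:~R)).
have Tphi x : A x -> T (x - (phi x)%:~R).
  by move=> /Tdec; apply: (epsilon_spec (inhabits 0%Z) (fun c : int => T (x - c%:~R))).
have phi_mod x (c : int) : A x -> T (x - c%:~R) -> (phi x = c %[mod m])%Z.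
  move=> Ax Tc; apply/eqP; rewrite eqz_mod_dvd; apply: Tdvd; rewrite intrB.
  have -> : (phi x)%:~R - c%:~R = (x - c%:~R) - (x - (phi x)%:~R) :> K by ring.
  by apply: addsubgroupB => //; apply: Tphi.
have T0 : T 0 by apply: addsubgroup0.
exists phi; split.
- move=> x y Ax Ay; apply: phi_mod; first exact: addsubgroupD.
  have -> : x + y - (phi x + phi y)%:~R = (x - (phi x)%:~R) + (y - (phi y)%:~R) :> K.
    by rewrite intrD; ring.
  by apply: addsubgroupD => //; apply: Tphi.
- move=> x y Ax Ay; apply: phi_mod; first exact: A_mul.
  have -> : x * y - (phi x * phi y)%:~R =
            y * (x - (phi x)%:~R) + (phi x)%:~R * (y - (phi y)%:~R) :> K.
    by rewrite intrM; ring.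
  apply: addsubgroupD => //; apply: T_mul => //;
    by [apply: Tphi | apply: subring_int].
- by apply: phi_mod => //; rewrite mulr1z subrr.
- move=> c; exists c%:~R; have Ac := subring_int c.
  by split=> //; apply: phi_mod => //; rewrite subrr.
move=> x Ax; split => [Tx | /dvdzP [q phi_qm]].
  apply: Tdvd; rewrite -[_%:~R](subKr x).
  by apply: addsubgroupB => //; apply: Tphi.
have -> : x = (x - (phi x)%:~R) + q%:~R * m%:~R by rewrite -intrM -phi_qm subrK.
by apply: addsubgroupD => //; [apply: Tphi | apply: T_mul => //; apply: subring_int].
Qed.

Lemma coprime_idealsC I J : coprime_ideals A I J -> coprime_ideals A J I.
Proof.
move=> IJ x; rewrite -IJ.
by split=> -[y [z [Jy [Iz ->]]]]; exists z, y; rewrite addrC.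
Qed.

(* The inverse of [I] is [A + tA]: [tI] lands in the other ideal [J], while
   [x = i + j] in [I + J = A] rewrites as [i * 1 + (t^-1 j) * t]. *)
Lemma invertible_ideal_of_scaled I J t : t != 0 ->
  integral_ideal A I -> integral_ideal A J -> coprime_ideals A I J ->
  (forall x, I x -> J (t * x)) -> (forall x, J x -> I (t^-1 * x)) ->
  invertible_ideal A I.
Proof.
move=> t0 [[I_grp I_mul] IA] [[J_grp J_mul] JA] IJ tIJ tJI.
pose L := addg A (scaleg t A).
have L_add a b : A a -> A b -> L (a + t * b)
  by move=> Aa Ab; exists a, (t * b); split=> //; split=> //; exists b.
have L_grp : addsubgroup L.
  split; first by rewrite -[0]addr0 -{2}(mulr0 t); apply: L_add; apply: addsubgroup0.
  move=> _ _ [a [_ [Aa [[b [Ab ->]] ->]]]] [c [_ [Ac [[d [Ad ->]] ->]]]].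
  rewrite (_ : _ - _ = a - c + t * (b - d)); last by ring.
  by apply: L_add; apply: addsubgroupB.
exists L; split.
  split=> // c _ Ac [a [_ [Aa [[b [Ab ->]] ->]]]].
  by rewrite (_ : _ * _ = c * a + t * (c * b)); [apply: L_add; apply: A_mul | ring].
move=> x; split.
  apply: prodg_sub => // i _ Ii [a [_ [Aa [[b [Ab ->]] ->]]]].
  rewrite (_ : _ * _ = a * i + b * (t * i)); last by ring.
  by apply: addsubgroupD => //; [apply/IA/I_mul | apply/JA/J_mul => //; apply: tIJ].
move=> /IJ [i [j [Ii [Jj ->]]]].
rewrite -[i]mulr1 -[j](mulVKf t0) [t * _]mulrC.
have A0 : A 0 by apply: addsubgroup0.
apply: prodg2 => //; [| exact: tJI |].
- by rewrite -[1]addr0 -(mulr0 t); apply: L_add.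
- by rewrite -[t]add0r -[t in _ + t]mulr1; apply: L_add.
Qed.

End IdealsOfSubring.

Section BlowupOfZgamma.
Variables (K : fieldExtType rat) (gamma : K) (n : nat) (f : {poly int}).
Hypothesis gamma_gen : <<1%VS; gamma>>%VS = fullv.
Hypothesis dimK : \dim {:K} = n.
Hypothesis n_ge2 : (2 <= n)%N.
Hypothesis size_f : size f = n.+1.
Hypothesis f_irr : irreducible_Z f.
Hypothesis f_gamma : zeval f gamma = 0.
Implicit Types (x y : K) (G H : {poly int}).

Local Notation a i := ((f`_i)%:~R : K).
Local Notation M := (Zspan (fun i : 'I_n => gamma ^+ i)).
Local Notation D := (Zspan (fun i : 'I_n => pj f n gamma i)).
Local Notation N := (Zspan (fun i : 'I_n => qj f gamma i)).
Local Notation A := (Zadj_cap gamma).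

Let A_grp : addsubgroup A := addsubgroup_Zadj_cap gamma.
Let A_mul : forall x y, A x -> A y -> A (x * y) := @Zadj_cap_mul _ gamma.
Let A1 : A 1 := Zadj_cap1 gamma.

Lemma adjoin_degree_gamma : adjoin_degree 1%VS gamma = n.
Proof.
have := dim_Fadjoin (1%VS : {vspace K}) gamma.
by rewrite gamma_gen dimv1 muln1 -dimK.
Qed.

Lemma gamma_neq0 : gamma != 0.
Proof.
apply: contraTneq n_ge2 => g0; rewrite -adjoin_degree_gamma g0.
by have := dim_Fadjoin (1%VS : {vspace K}) 0; rewrite Fadjoin0 dimv1 muln1 => <-.
Qed.

Lemma zcontents_f : zcontents f = 1 \/ zcontents f = -1.
Proof.
have [_ _ /(_ (zcontents f)%:P (zprimitive f))] := f_irr.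
rewrite mul_polyC -zpolyEprim => /(_ erefl) [].
  by rewrite poly_unitE size_polyC coefC /= => /andP [_ /orP [] /eqP ->]; [left | right].
by rewrite poly_unitE size_zprimitive size_f => /andP [/eqP n0 _]; move: n_ge2 n0; lia.
Qed.

(* Gauss's lemma, for the primitive [f] whose image in [Q[X]] is the minimal polynomial
   of [gamma]. *)
Lemma f_dvd_of_root H : zeval H gamma = 0 -> exists G, H = f * G.
Proof.
move=> H_gamma.
pose toK P := map_poly (fun z : int => z%:~R : K) P.
have toKE P : toK P = map_poly (in_alg K) (map_poly (fun z : int => z%:~R : rat) P).
  by rewrite -map_poly_comp; apply: eq_map_poly => z; exact: (esym (rmorph_int (in_alg K) z)).
have toK_over P : toK P \is a polyOver 1%VS.
  by apply/polyOver1P; exists (map_poly (fun z : int => z%:~R : rat) P); rewrite toKE.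
have minP_dvd P : zeval P gamma = 0 -> minPoly 1 gamma %| toK P.
  by move=> P_gamma; rewrite minPoly_dvdp ?toK_over // /root -[_.[_]]/(zeval P gamma) P_gamma.
have minP_f : minPoly 1 gamma %= toK f.
  rewrite -dvdp_size_eqp ?minP_dvd // size_minPoly adjoin_degree_gamma toKE size_map_poly.
  by rewrite size_map_inj_poly ?size_f //; apply: intr_inj.
have : toK f %| toK H by rewrite -(eqp_dvdl _ minP_f) minP_dvd.
rewrite !toKE dvdp_map dvdp_rat_int => /dvdpP_int [G ->].
have [c ->] : exists c : int, zprimitive f = c *: f.
  have fE := zpolyEprim f; set z := zprimitive f in fE *.
  by case: zcontents_f => c1; rewrite c1 in fE; [exists 1 | exists (-1)];
    rewrite fE scalerA ?mulrNN mulr1 scale1r.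
by exists (c *: G); rewrite -scalerAl scalerAr.
Qed.

Definition tail k := zeval (drop_poly k f) gamma.

Lemma tail0 : tail 0 = 0.
Proof. by rewrite /tail drop_poly0l. Qed.

Lemma tail_eq0 k : (n < k)%N -> tail k = 0.
Proof. by move=> ltnk; rewrite /tail drop_poly_eq0 ?size_f // /zeval map_poly0 horner0. Qed.

Lemma tailn : tail n = a n.
Proof.
rewrite /tail (_ : drop_poly n f = (f`_n)%:P) ?zevalC //.
apply/polyP => -[|i]; rewrite coefC coef_drop_poly //= nth_default // size_f; lia.
Qed.

Lemma tailS k : gamma * tail k.+1 = tail k - a k.
Proof.
rewrite /tail (_ : drop_poly k f = (f`_k)%:P + drop_poly k.+1 f * 'X).
  by rewrite zevalD zevalM zevalC zevalX; ring.
apply/polyP => -[|i]; rewrite coefD coefMX coefC !coef_drop_poly ?addr0 //=.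
by rewrite add0r addSnnS.
Qed.

Lemma pj_tail j : (j <= n)%N -> pj f n gamma j = tail (n - j).
Proof.
move=> lejn; rewrite /tail (@zeval_coef_wide _ j.+1); last by rewrite size_drop_poly size_f; lia.
rewrite /pj (reindex_inj rev_ord_inj) /=; apply: eq_bigr => i _.
have ltij := ltn_ord i; rewrite coef_drop_poly.
by congr ((f`_ _)%:~R * _ ^+ _); lia.
Qed.

Lemma qj_tail j : (j < n)%N -> qj f gamma j = - (gamma * tail j.+1).
Proof.
move=> ltjn; have gU : gamma \is a GRing.unit by rewrite unitfE gamma_neq0.
have qjE : gamma ^+ j * qj f gamma j = zeval (take_poly j.+1 f) gamma.
  rewrite (@zeval_coef_wide _ j.+1) ?size_take_poly //.
  rewrite /qj mulr_sumr (reindex_inj rev_ord_inj) /=; apply: eq_bigr => i _.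
  have ltij := ltn_ord i; rewrite coef_take_poly ltn_ord mulrCA -exprB ?gU //; last by lia.
  by congr ((f`_ _)%:~R * _ ^+ _); lia.
have := f_gamma; rewrite -{1}(poly_take_drop j.+1 f) zevalD zevalM zevalXn -/(tail _) => /eqP.
rewrite addr_eq0 -qjE exprS => /eqP take_gamma.
by apply: (mulfI (expf_neq0 j gamma_neq0)); rewrite take_gamma; ring.
Qed.

Lemma D_tail k : D (tail k).
Proof.
have D0 : D 0 := addsubgroup0 (addsubgroup_Zspan _).
have [ltnk | lekn] := ltnP n k; first by rewrite tail_eq0.
case: k lekn => [|k] lekn; first by rewrite tail0.
have ltj : (n - k.+1 < n)%N by lia.
by rewrite -[k.+1](subKn lekn) -pj_tail ?leq_subr //; apply: (Zspan_gen _ (Ordinal ltj)).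
Qed.

Lemma N_tail k : N (- (gamma * tail k)).
Proof.
have N0 : N 0 := addsubgroup0 (addsubgroup_Zspan _).
have [ltnk | lekn] := ltnP n k; first by rewrite tail_eq0 // mulr0 oppr0.
case: k lekn => [|k] lekn; first by rewrite tail0 mulr0 oppr0.
by rewrite -qj_tail //; apply: (Zspan_gen _ (Ordinal lekn)).
Qed.

Lemma N_sub_Zadj_inv : subg N (Zadj gamma^-1).
Proof.
apply: Zspan_sub => [|j]; first exact: addsubgroup_Zadj.
apply: addsubgroup_sum => [|i]; first exact: addsubgroup_Zadj.
by apply: Zadj_mul; [apply: Zadj_int | rewrite -exprVn; apply: Zadj_exp].
Qed.

Lemma D_drop_mulf G k : D (zeval (drop_poly k (f * G)) gamma).
Proof.
have D_grp := addsubgroup_Zspan (fun i : 'I_n => pj f n gamma i).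
elim/poly_ind: G k => [|G c IH] k.
  by rewrite mulr0 drop_poly0r /zeval map_poly0 horner0; apply: addsubgroup0.
rewrite (_ : f * (G * 'X + c%:P) = (f * G) * 'X^1 + c *: f); last first.
  by rewrite mulrDr mulrA -mul_polyC expr1 [_ * f]mulrC.
rewrite drop_polyD drop_polyZ zevalD zevalZ.
apply: addsubgroupD => //; last by apply: addsubgroup_intrM => //; apply: D_tail.
case: k => [|k]; last by rewrite drop_polyMXn subSS subn0 expr0 mulr1; apply: IH.
by rewrite drop_poly0l !zevalM f_gamma !mul0r; apply: addsubgroup0.
Qed.

(* If [x = P(gamma)] and [gamma x = Q(gamma^-1)], then [P X^(m+1) - rev Q] vanishes at
   [gamma], hence is a multiple [f G], and [x] is the tail of [f G] beyond degree [m]. *)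
Lemma memD x : D x <-> Zadj gamma x /\ Zadj gamma^-1 (gamma * x).
Proof.
split.
  apply: (Zspan_sub (S := fun y => Zadj gamma y /\ Zadj gamma^-1 (gamma * y))) => [|i].
    by apply: addsubgroupI; [|apply: addsubgroup_mull]; apply: addsubgroup_Zadj.
  rewrite pj_tail ?(ltnW (ltn_ord i)) //; split; first exact: Zadj_zeval.
  rewrite -[_ * _]opprK; apply: addsubgroupN; first exact: addsubgroup_Zadj.
  exact/N_sub_Zadj_inv/N_tail.
move=> [[P ->] [Q gxQ]]; set m := size Q.
have := zeval_rev (invr_neq0 gamma_neq0) (leqnSn m).
rewrite invrK {1}/zeval -gxQ exprVn invrK; set Q' := \poly_(_ < _) _ => Q'E.
have sQ' : (size (- Q') <= m.+1)%N by rewrite size_polyN; apply: size_poly.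
have : zeval (- Q' + P * 'X^(m.+1)) gamma = 0.
  by rewrite zevalD zevalN zevalM zevalXn -Q'E -/(zeval P gamma) exprS; ring.
move=> /f_dvd_of_root [G fG].
by have := D_drop_mulf G m.+1; rewrite -fG drop_polyDMXn.
Qed.

Lemma memN x : N x <-> D (gamma^-1 * x).
Proof.
have N_grp := addsubgroup_Zspan (fun i : 'I_n => qj f gamma i).
have D_grp := addsubgroup_Zspan (fun i : 'I_n => pj f n gamma i).
split.
  apply: (Zspan_sub (S := fun y => D (gamma^-1 * y))) => [|i]; first exact: addsubgroup_mull.
  rewrite qj_tail // mulrN mulKf ?gamma_neq0 //.
  by apply: addsubgroupN => //; apply: D_tail.
move=> Dx; rewrite -[x](mulVKf gamma_neq0).
apply: (Zspan_sub (addsubgroup_mull _ N_grp)) Dx => i.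
rewrite /= pj_tail ?(ltnW (ltn_ord i)) // -[_ * _]opprK.
by apply: addsubgroupN => //; apply: N_tail.
Qed.

Lemma memN_Zadj x : N x <-> Zadj gamma (gamma^-1 * x) /\ Zadj gamma^-1 x.
Proof. by rewrite memN memD mulVKf ?gamma_neq0. Qed.

Lemma D_sub_A : subg D A.
Proof.
move=> x /memD [Zx Zgx]; split=> //.
by rewrite -[x](mulKf gamma_neq0); apply: Zadj_mul Zgx; apply: Zadj_gen.
Qed.

Lemma N_sub_A : subg N A.
Proof.
move=> x /memN_Zadj [Zgx Zx]; split=> //.
by rewrite -[x](mulVKf gamma_neq0); apply: Zadj_mul Zgx; apply: Zadj_gen.
Qed.

Lemma Asubmodule_D : Asubmodule A D.
Proof.
split=> [|c x [Zc Zic] /memD [Zx Zgx]]; first exact: addsubgroup_Zspan.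
by apply/memD; split; [|rewrite mulrCA]; apply: Zadj_mul.
Qed.

Lemma Asubmodule_N : Asubmodule A N.
Proof.
split=> [|c x [Zc Zic] /memN_Zadj [Zgx Zx]]; first exact: addsubgroup_Zspan.
by apply/memN_Zadj; split; [rewrite mulrCA|]; apply: Zadj_mul.
Qed.

Lemma A_decompD x : A x -> exists c : int, D (x - c%:~R).
Proof.
move=> [Zx [Q xQ]]; exists Q`_0; apply/memD; split.
  by apply: addsubgroupB => //; [apply: addsubgroup_Zadj | apply: Zadj_int].
rewrite xQ -/(zeval Q _) zeval_drop1 addrC addKr mulrCA mulfV ?invr_eq0 ?gamma_neq0 //.
by rewrite mulr1; apply: Zadj_zeval.
Qed.

Lemma A_decompN x : A x -> exists c : int, N (x - c%:~R).
Proof.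
move=> [[P xP] Zix]; exists P`_0; apply/memN_Zadj; split.
  rewrite xP -/(zeval P _) zeval_drop1 addrC addKr mulrC mulfK ?gamma_neq0 //.
  exact: Zadj_zeval.
by apply: addsubgroupB => //; [apply: addsubgroup_Zadj | apply: Zadj_int].
Qed.

Lemma Zdeg_lt_tail_mul k i : (i < n)%N -> Zdeg_lt gamma n (tail k * gamma ^+ i).
Proof.
have Z0 : Zdeg_lt gamma n 0 := addsubgroup0 (addsubgroup_Zdeg_lt _ _).
elim: i k => [|i IH] [|k] ltin; rewrite ?tail0 ?mul0r //.
  by rewrite mulr1; exists (drop_poly k.+1 f); rewrite size_drop_poly size_f; split=> //; lia.
rewrite exprS mulrA [tail _ * _]mulrC tailS mulrBl.
apply: addsubgroupB; first exact: addsubgroup_Zdeg_lt.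
  by apply: IH; lia.
by apply: Zdeg_lt_monomial; lia.
Qed.

Lemma D_mulM x y : D x -> M y -> M (x * y).
Proof.
have M_grp := addsubgroup_Zspan (fun i : 'I_n => gamma ^+ i).
move=> Dx; apply: (Zspan_sub (S := fun y => M (x * y))) => [|i]; first exact: addsubgroup_mull.
rewrite mulrC; apply: (Zspan_sub (S := fun x => M (gamma ^+ i * x))) Dx => [|j].
  exact: addsubgroup_mull.
by rewrite /= mulrC pj_tail ?(ltnW (ltn_ord j)) //; apply/Zspan_expE/Zdeg_lt_tail_mul.
Qed.

Lemma A_sub_colonM : subg A (colon M M).
Proof.
move=> x /A_decompD [c Dxc] y My; rewrite -(subrK c%:~R x) mulrDl.
apply: addsubgroupD; [apply: addsubgroup_Zspan | exact: D_mulM |].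
by apply: addsubgroup_intrM => //; apply: addsubgroup_Zspan.
Qed.

Lemma Bl_eq_A : Bl (Zspan (fun i : 'I_2 => gamma ^+ i)) = A.
Proof.
apply: functional_extensionality => x; apply: propositional_extensionality; split.
  exact: Zadj_cap_of_Bl gamma_neq0 x.
by move=> /A_sub_colonM; apply: Bl_Zpows2_of_colon.
Qed.

Lemma A_eq_colonM : eqg A (colon M M).
Proof.
move=> x; split; first exact: A_sub_colonM.
by move=> /(Bl_Zpows2_of_colon n_ge2); rewrite Bl_eq_A.
Qed.

Lemma A_eq_Z_add_D : eqg A (addg (Zspan (fun _ : 'I_1 => 1)) D).
Proof. exact: eqg_Zspan1_add A_grp A1 _ D_sub_A A_decompD. Qed.

Lemma A_eq_Z_add_N : eqg A (addg (Zspan (fun _ : 'I_1 => 1)) N).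
Proof. exact: eqg_Zspan1_add A_grp A1 _ N_sub_A A_decompN. Qed.

Lemma addsubgroup_ND : addsubgroup (addg N D).
Proof. by apply: addsubgroup_addg; apply: addsubgroup_Zspan. Qed.

Lemma N_add_D1 : addg N D 1.
Proof.
have ND_a k : addg N D (a k).
  exists (- (gamma * tail k.+1)), (tail k); split; first exact: N_tail.
  by split; [apply: D_tail | rewrite tailS; ring].
have := addsubgroup_zcontents addsubgroup_ND ND_a.
case: zcontents_f => -> // ND_N1; rewrite -[1]opprK.
by apply: addsubgroupN ND_N1; apply: addsubgroup_ND.
Qed.

Lemma coprime_N_D : coprime_ideals A N D.
Proof.
move=> x; split.
  move=> [u [v [Nu [Dv ->]]]].
  by apply: addsubgroupD; [exact: A_grp | apply: N_sub_A | apply: D_sub_A].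
move=> /A_decompD [c Dxc]; rewrite -(subrK c%:~R x).
apply: addsubgroupD; first exact: addsubgroup_ND.
  exists 0, (x - c%:~R); rewrite add0r; split=> //.
  exact: addsubgroup0 (addsubgroup_Zspan _).
by rewrite -[c%:~R]mulr1; apply: addsubgroup_intrM addsubgroup_ND _ _ N_add_D1.
Qed.

Lemma integral_ideal_N : integral_ideal A N.
Proof. by split; [apply: Asubmodule_N | apply: N_sub_A]. Qed.

Lemma integral_ideal_D : integral_ideal A D.
Proof. by split; [apply: Asubmodule_D | apply: D_sub_A]. Qed.

Lemma invertible_ideal_N : invertible_ideal A N.
Proof.
apply: (invertible_ideal_of_scaled A_grp A_mul A1 (invr_neq0 gamma_neq0)
          integral_ideal_N integral_ideal_D coprime_N_D).
  by move=> x /memN.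
by move=> x Dx; rewrite invrK memN mulKf ?gamma_neq0.
Qed.

Lemma invertible_ideal_D : invertible_ideal A D.
Proof.
apply: (invertible_ideal_of_scaled A_grp A_mul A1 gamma_neq0
          integral_ideal_D integral_ideal_N (coprime_idealsC coprime_N_D)).
  by move=> x Dx; rewrite memN mulKf ?gamma_neq0.
by move=> x /memN.
Qed.

Lemma dvd_of_N_int (c : int) : N c%:~R -> (f`_0 %| c)%Z.
Proof.
move=> /memN_Zadj [[P cP] _].
have : zeval ('X * P - c%:P) gamma = 0.
  by rewrite zevalD zevalN zevalM zevalX zevalC -[zeval P _]/(_.[_]) -cP mulVKf ?gamma_neq0 ?subrr.
move=> /f_dvd_of_root [G /(congr1 (fun p : {poly int} => p`_0))].
rewrite /= coefB coefXM coefC /= coef0M sub0r => cE.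
by apply/dvdzP; exists (- G`_0); rewrite -[c]opprK cE mulrC mulNr.
Qed.

Lemma dvd_of_D_int (c : int) : D c%:~R -> (f`_n %| c)%Z.
Proof.
have [-> _ | c0 /memD [_ [Q cQ]]] := eqVneq c 0; first by rewrite dvdz0.
set m := size Q.
have := zeval_rev (invr_neq0 gamma_neq0) (leqnSn m).
rewrite invrK {1}/zeval -cQ exprVn invrK; set Q' := \poly_(_ < _) _ => Q'E.
have sQ' : (size (- Q') < size (c *: 'X^(m.+1)))%N.
  by rewrite size_polyN size_scale // size_polyXn ltnS; apply: size_poly.
have : zeval (- Q' + c *: 'X^(m.+1)) gamma = 0.
  by rewrite zevalD zevalN zevalZ zevalXn -Q'E exprS; ring.
move=> /f_dvd_of_root [G /(congr1 lead_coef)].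
rewrite lead_coefDr // lead_coefZ lead_coefXn mulr1 lead_coefM => ->.
by apply/dvdzP; exists (lead_coef G); rewrite mulrC [lead_coef f]lead_coefE size_f.
Qed.

Lemma quot_iso_Zmod_N : quot_iso_Zmod A N f`_0.
Proof.
apply: quot_iso_Zmod_intro A_grp A_mul A1 _ _ Asubmodule_N A_decompN _ dvd_of_N_int.
have lt0n : (0 < n)%N by apply: leq_trans n_ge2.
have := Zspan_gen (fun i : 'I_n => qj f gamma i) (Ordinal lt0n).
by rewrite /qj /= big_ord1 subn0 expr0 invr1 mulr1.
Qed.

Lemma quot_iso_Zmod_D : quot_iso_Zmod A D f`_n.
Proof.
apply: quot_iso_Zmod_intro A_grp A_mul A1 _ _ Asubmodule_D A_decompD _ dvd_of_D_int.
by rewrite -tailn; apply: D_tail.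
Qed.

Lemma colon_N_D : eqg (colon N D) (scaleg gamma A).
Proof.
move=> x; split; last first.
  move=> [c [Ac ->]] y Dy; apply/memN; rewrite -mulrA mulKf ?gamma_neq0 //.
  exact: Asubmodule_D.2.
move=> xND; exists (gamma^-1 * x); split; last by rewrite mulVKf ?gamma_neq0.
rewrite -[_ * x]mulr1; have [u [v [Nu [Dv ->]]]] := N_add_D1; rewrite mulrDr -!mulrA.
apply: addsubgroupD; first exact: A_grp.
  by rewrite mulrCA; apply: N_sub_A; apply: xND; apply/memN.
by apply: D_sub_A; apply/memN; apply: xND.
Qed.

End BlowupOfZgamma.

Theorem theorem4p59 (K : fieldExtType rat) (gamma : K) (n : nat) (f : {poly int}) :
  <<1%VS; gamma>>%VS = fullv ->
  \dim {:K} = n ->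
  (2 <= n)%N ->
  size f = n.+1 ->
  irreducible_Z f ->
  (map_poly (fun z : int => z%:~R) f).[gamma] = 0 ->
  let M := Zspan (fun i : 'I_n => gamma ^+ i) in
  let D := Zspan (fun i : 'I_n => pj f n gamma i) in
  let N := Zspan (fun i : 'I_n => qj f gamma i) in
  let Z := Zspan (fun _ : 'I_1 => (1 : K)) in
  let A := Bl (Zspan (fun i : 'I_2 => gamma ^+ i)) in
  ((eqg A (colon M M) /\
    eqg A (fun x => Zadj gamma x /\ Zadj gamma^-1 x) /\
    eqg A (addg Z N) /\
    eqg A (addg Z D)) /\
   (integral_ideal A N /\ integral_ideal A D /\
    invertible_ideal A N /\ invertible_ideal A D /\
    coprime_ideals A N D /\
    quot_iso_Zmod A N f`_0 /\ quot_iso_Zmod A D f`_n /\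
    eqg (colon N D) (scaleg gamma A))).
Proof.
move=> gamma_gen dimK n_ge2 size_f f_irr f_gamma M D N Z A.
rewrite {}/A (Bl_eq_A gamma_gen dimK n_ge2 size_f f_irr f_gamma).
split.
  split; first by apply: (A_eq_colonM (f := f)).
  split; first by [].
  split; first by apply: A_eq_Z_add_N.
  by apply: A_eq_Z_add_D.
split; first by apply: integral_ideal_N.
split; first by apply: integral_ideal_D.
split; first by apply: invertible_ideal_N.
split; first by apply: invertible_ideal_D.
split; first by apply: coprime_N_D.
split; first by apply: quot_iso_Zmod_N.
split; first by apply: quot_iso_Zmod_D.
by apply: colon_N_D.
Qed.
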